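(* Let $K\subset\mathbb{R}^n$ and $C\subset\mathbb{R}^m$ be nonempty, convex, closed and bounded sets, and let $f,h:\mathbb{R}^n\times\mathbb{R}^m\to\mathbb{R}$ be continuous functions such that, for every $y\in K$, $f(y,\cdot)$ and $h(y,\cdot)$ are convex, and such that $f$ takes only positive values. Let $\varepsilon>0$ and $y\in K$. Then the problem $\min\{h(y,z)+\varepsilon f^2(y,z)\mid z\in C\}$ admits at least one solution, i.e. $\mathcal{S}_\varepsilon(y)\neq\emptyset$, where $\mathcal{S}_\varepsilon(y)=\operatorname{argmin}\{h(y,z)+\varepsilon f^2(y,z)\mid z\in C\}$. Moreover, there exists a constant $\kappa_y\in\mathbb{R}$ such that $f(y,x)=\kappa_y$ for all $x\in\mathcal{S}_\varepsilon(y)$.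
   Context: $f^2(y,z)$ denotes $(f(y,z))^2$. *)

From HB Require Import structures.
From mathcomp Require Import all_boot all_order all_algebra.
From mathcomp Require Import all_classical all_reals all_analysis.
Set Implicit Arguments. Unset Strict Implicit. Unset Printing Implicit Defensive.
Import Order.TTheory GRing.Theory Num.Theory.
Import numFieldNormedType.Exports.
Local Open Scope classical_set_scope.
Local Open Scope ring_scope.

Definition is_convex_set (R : realType) (V : lmodType R) (A : set V) : Prop :=
  forall x y : V, A x -> A y -> forall t : R, 0 <= t -> t <= 1 ->
    A (t *: x + (1 - t) *: y).

Definition is_convex_fun (R : realType) (V : lmodType R) (g : V -> R) : Prop :=
  forall x y : V, forall t : R, 0 <= t -> t <= 1 ->
    g (t *: x + (1 - t) *: y) <= t * g x + (1 - t) * g y.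

Definition argmin_on (T : Type) (R : realType) (g : T -> R) (A : set T) : set T :=
  [set z | A z /\ forall w, A w -> g z <= g w].

Definition S_eps (R : realType) (n m : nat)
  (f h : 'rV[R]_n * 'rV[R]_m -> R) (C : set 'rV[R]_m) (eps : R) (y : 'rV[R]_n)
  : set 'rV[R]_m :=
  argmin_on (fun z => h (y, z) + eps * (f (y, z)) ^+ 2) C.

From HB Require Import structures.
From mathcomp Require Import all_boot all_order all_algebra.
From mathcomp Require Import all_classical all_reals all_analysis.
From mathcomp Require Import ring lra.
Set Implicit Arguments.
Unset Strict Implicit.
Unset Printing Implicit Defensive.
Import Order.TTheory GRing.Theory Num.Theory.
Import numFieldNormedType.Exports.
Local Open Scope classical_set_scope.
Local Open Scope ring_scope.

(* Existence is the extreme value theorem on the compact set C. For the value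
   of f, compare two minimizers x0, x1 with their midpoint: h and f are convex
   and f >= 0, so the penalized objective at the midpoint lies below the average
   of its values at x0 and x1 by eps (f x0 - f x1)^2 / 4, while it cannot lie
   below the common minimal value. *)

Lemma compact_argmin_neq0 (T : topologicalType) (R : realType) (g : T -> R)
    (A : set T) :
  A !=set0 -> compact A -> {within A, continuous g} -> argmin_on g A !=set0.
Proof.
move=> A0 Acpt gc; have [c cA cmin] := compact_EVT_min A0 Acpt gc.
exists c; split; first by rewrite inE in cA.
by move=> w wA; apply: cmin; rewrite inE.
Qed.

Lemma continuous_add_scale_sqr (T : topologicalType) (R : realType)
    (g k : T -> R) (eps : R) :
  continuous g -> continuous k -> continuous (fun z => g z + eps * k z ^+ 2).
Proof.
move=> gc kc z; apply: cvgD; first exact: gc.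
apply: cvgM; first exact: cvg_cst.
by rewrite expr2; apply: cvgM; exact: kc.
Qed.

Lemma sqr_convex_comb (R : comPzRingType) (t a b : R) :
  (t * a + (1 - t) * b) ^+ 2
  = t * a ^+ 2 + (1 - t) * b ^+ 2 - t * (1 - t) * (a - b) ^+ 2.
Proof. ring. Qed.

Section PenalizedConvexArgmin.
Variables (R : realType) (V : lmodType R) (g k : V -> R) (eps : R).
Hypotheses (g_cvx : is_convex_fun g) (k_cvx : is_convex_fun k).
Hypotheses (k_ge0 : forall x, 0 <= k x) (eps_gt0 : 0 < eps).

Let pen z := g z + eps * k z ^+ 2.

Lemma convex_ge0_sqr_gap x y t : 0 <= t -> t <= 1 ->
  k (t *: x + (1 - t) *: y) ^+ 2
  <= t * k x ^+ 2 + (1 - t) * k y ^+ 2 - t * (1 - t) * (k x - k y) ^+ 2.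
Proof.
move=> t0 t1; rewrite -sqr_convex_comb.
have kmid := k_cvx x y t0 t1.
by rewrite ler_pXn2r ?nnegrE // (le_trans (k_ge0 _) kmid).
Qed.

Lemma penalized_convex_gap x y t : 0 <= t -> t <= 1 ->
  pen (t *: x + (1 - t) *: y) + eps * (t * (1 - t)) * (k x - k y) ^+ 2
  <= t * pen x + (1 - t) * pen y.
Proof.
move=> t0 t1; have gmid := g_cvx x y t0 t1.
have kmid := ler_wpM2l (ltW eps_gt0) (convex_ge0_sqr_gap x y t0 t1).
rewrite /pen; move: gmid kmid.
move: (g _) (k (t *: x + _)) (k x) (k y) => gm km kx ky; nra.
Qed.

Variable C : set V.
Hypothesis C_cvx : is_convex_set C.

Lemma argmin_penalized_eq x0 x1 :
  argmin_on pen C x0 -> argmin_on pen C x1 -> k x0 = k x1.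
Proof.
move=> [x0C x0min] [x1C x1min].
have half0 : 0 <= 2^-1 :> R by rewrite invr_ge0 ler0n.
have half1 : 2^-1 <= 1 :> R by rewrite invf_le1 ?ler1n.
have w_gt0 : 0 < eps * (2^-1 * (1 - 2^-1)) :> R.
  by rewrite mulr_gt0 // mulr_gt0 ?invr_gt0 ?subr_gt0 ?invf_lt1 ?ltr0n ?ltr1n.
have pen_eq : pen x1 = pen x0 by apply/le_anti; rewrite x1min // x0min.
have gap := penalized_convex_gap x0 x1 half0 half1.
rewrite pen_eq -mulrDl subrKC mul1r in gap.
have d_le0 : eps * (2^-1 * (1 - 2^-1)) * (k x0 - k x1) ^+ 2 <= 0.
  rewrite -(lerD2l (pen (2^-1 *: x0 + (1 - 2^-1) *: x1))) addr0.
  exact: le_trans gap (x0min _ (C_cvx x0C x1C half0 half1)).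
move: d_le0; rewrite pmulr_rle0 // => d_le0.
by apply/eqP; rewrite -subr_eq0 -sqrf_eq0 eq_le d_le0 sqr_ge0.
Qed.

End PenalizedConvexArgmin.

Theorem lemma2p1 (R : realType) (n m : nat)
  (K : set 'rV[R]_n) (C : set 'rV[R]_m)
  (f h : 'rV[R]_n * 'rV[R]_m -> R)
  (K0 : K !=set0) (Kc : is_convex_set K) (Kcl : closed K) (Kb : bounded_set K)
  (C0 : C !=set0) (Cc : is_convex_set C) (Ccl : closed C) (Cb : bounded_set C)
  (fc : continuous f) (hc : continuous h)
  (fcvx : forall y, K y -> is_convex_fun (fun z => f (y, z)))
  (hcvx : forall y, K y -> is_convex_fun (fun z => h (y, z)))
  (fpos : forall p, 0 < f p)
  (eps : R) (heps : 0 < eps) (y : 'rV[R]_n) (hy : K y) :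
  S_eps f h C eps y !=set0 /\
  exists kappa : R, forall x, S_eps f h C eps y x -> f (y, x) = kappa.
Proof.
have pen_cont : continuous (fun z => h (y, z) + eps * f (y, z) ^+ 2).
  exact: continuous_add_scale_sqr ((continuous_curry hc).2 y)
    ((continuous_curry fc).2 y).
have [x0 Sx0] := compact_argmin_neq0 C0 (bounded_closed_compact Cb Ccl)
  (continuous_subspaceT pen_cont).
split; first by exists x0.
exists (f (y, x0)) => x Sx.
apply: (argmin_penalized_eq (hcvx y hy) (fcvx y hy) _ heps Cc Sx Sx0).
by move=> z; exact: ltW.
Qed.
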